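(* Let $k\ge 0$ be an integer and let $L_k$ be the $k\times(k+1)$ pencil with $\lambda$ in positions $(i,i)$ and $1$ in positions $(i,i+1)$, $i=1,\dots,k$, and zeros elsewhere. Then for each $j=0,1,\dots,k+1$ there exist vector polynomials $u_1(\lambda),\dots,u_{k+1}(\lambda)\in\mathbb{C}[\lambda]^k$ and $v_1(\lambda),\dots,v_{k+1}(\lambda)\in\mathbb{C}[\lambda]^{k+1}$, all of degree at most $1$, such that $$L_k=u_1(\lambda)v_1(\lambda)^T+\cdots+u_{k+1}(\lambda)v_{k+1}(\lambda)^T$$ and $\deg u_1=\cdots=\deg u_j=\deg v_{j+1}=\cdots=\deg v_{k+1}=0$.
   Context: The degree of a vector polynomial is the maximum degree of its entries (a zero vector is regarded as having degree $0$). *)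

From HB Require Import structures.
From mathcomp Require Import all_boot all_order all_algebra all_field.
Set Implicit Arguments. Unset Strict Implicit. Unset Printing Implicit Defensive.
Import Order.TTheory GRing.Theory Num.Theory.
Local Open Scope ring_scope.

(* Degree of a polynomial: (size p).-1, so the zero polynomial has degree 0. *)
Definition pdeg (R : nzRingType) (p : {poly R}) : nat := (size p).-1.

Definition vdeg (R : nzRingType) (n : nat) (u : 'cV[{poly R}]_n) : nat :=
  \max_(i < n) pdeg (u i ord0).

Definition Lpencil (R : nzRingType) (k : nat) : 'M[{poly R}]_(k, k.+1) :=
  \matrix_(i < k, j < k.+1)
    (if val j == val i then 'X else if val j == (val i).+1 then 1 else 0).

From HB Require Import structures.
From mathcomp Require Import all_boot all_order all_algebra all_field.
Set Implicit Arguments. Unset Strict Implicit. Unset Printing Implicit Defensive.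
Import Order.TTheory GRing.Theory Num.Theory.
Local Open Scope ring_scope.

(* An upper triangular matrix A splits as a sum of outer products by taking
   its first j rows one at a time (e_i times row i of A) and the remaining
   rows column by column (column i of the lower part of A times e_i). As A is
   upper triangular, the lower part vanishes in the columns i < j, so the
   index i < n can stand for row i when i < j and for column i when i >= j.
   Rows and columns of L_k have degree at most 1 and the e_i degree 0. *)

Section UpperTriangularSplit.

Variables (R : nzRingType) (a : nat -> nat -> R).
Hypothesis a_upper : forall r c, (c < r)%N -> a r c = 0.

Definition split_left (m j i : nat) : 'cV[R]_m :=
  \col_r (if (i < j)%N then (val r == i)%:R
          else if (j <= r)%N then a r i else 0).

Definition split_right (n j i : nat) : 'cV[R]_n :=
  \col_c (if (i < j)%N then a i c else (val c == i)%:R).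

Lemma sum_ord_delta (n x : nat) (y : R) :
  \sum_(i < n) (val i == x)%:R * y = if (x < n)%N then y else 0.
Proof.
have -> : \sum_(i < n) (val i == x)%:R * y = \sum_(i < n | val i == x) y.
  rewrite [RHS]big_mkcond; apply: eq_bigr => i _.
  by case: eqP; rewrite ?mul1r ?mul0r.
by rewrite big_ord1_eq.
Qed.

Lemma upper_mx_split (m n j : nat) :
  \matrix_(r < m, c < n) a r c =
  \sum_(i < n) split_left m j i *m (split_right n j i)^T.
Proof.
apply/matrixP => r c; rewrite summxE mxE.
under eq_bigr => i _ do rewrite !mxE big_ord1 !mxE.
symmetry; have [rj | jr] := ltnP r j.
- rewrite (eq_bigr (fun i => (val i == val r)%:R * a r c)) => [|i _].
    rewrite sum_ord_delta; case: ltnP => // nr.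
    by rewrite a_upper // (leq_trans (ltn_ord c)).
  case: ltnP => ij; first by rewrite eq_sym; case: eqP => [-> | _]; rewrite ?mul0r.
  have /negPf -> : val i != val r by rewrite neq_ltn (leq_trans rj ij) orbT.
  by rewrite !mul0r.
- rewrite (eq_bigr (fun i => (val i == val c)%:R * a r c)) => [|i _].
    by rewrite sum_ord_delta ltn_ord.
  case: ltnP => ij; last first.
    rewrite [val c == _]eq_sym; case: eqP => [-> | _]; first by rewrite mulr1 mul1r.
    by rewrite mulr0 mul0r.
  have /negPf -> : val r != val i by rewrite neq_ltn (leq_trans ij jr) orbT.
  rewrite mul0r; case: eqP => [<- | _]; last by rewrite mul0r.
  by rewrite a_upper ?mulr0 // (leq_trans ij jr).
Qed.

End UpperTriangularSplit.

Section SplitDegrees.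

Variables (R : nzRingType) (a : nat -> nat -> {poly R}).

Lemma vdeg_leq (n d : nat) (u : 'cV[{poly R}]_n) :
  (forall r, (size (u r ord0) <= d.+1)%N) -> (vdeg u <= d)%N.
Proof.
move=> size_u; apply/bigmax_leqP => r _ /=.
by rewrite /pdeg; case: (size _) (size_u r).
Qed.

Lemma size_natr_poly (b : nat) : (size (b%:R : {poly R}) <= 1)%N.
Proof. by rewrite -polyC_natr size_polyC_leq1. Qed.

Lemma vdeg_split_left_leq (m d j i : nat) :
  (forall r c, (size (a r c) <= d.+1)%N) -> (vdeg (split_left a m j i) <= d)%N.
Proof.
move=> size_a; apply: vdeg_leq => r; rewrite mxE.
case: ifP => _; first exact: leq_trans (size_natr_poly _) _.
by case: ifP; rewrite ?size_poly0.
Qed.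

Lemma vdeg_split_right_leq (n d j i : nat) :
  (forall r c, (size (a r c) <= d.+1)%N) -> (vdeg (split_right a n j i) <= d)%N.
Proof.
move=> size_a; apply: vdeg_leq => c; rewrite mxE.
by case: ifP => _; last exact: leq_trans (size_natr_poly _) _.
Qed.

Lemma vdeg_split_left_row (m j i : nat) :
  (i < j)%N -> vdeg (split_left a m j i) = 0%N.
Proof.
move=> ij; apply/eqP; rewrite -leqn0; apply: vdeg_leq => r.
by rewrite mxE ij size_natr_poly.
Qed.

Lemma vdeg_split_right_col (n j i : nat) :
  (j <= i)%N -> vdeg (split_right a n j i) = 0%N.
Proof.
move=> ji; apply/eqP; rewrite -leqn0; apply: vdeg_leq => c.
by rewrite mxE ltnNge ji size_natr_poly.
Qed.

End SplitDegrees.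

Definition pencil_entry (R : nzRingType) (r c : nat) : {poly R} :=
  if c == r then 'X else if c == r.+1 then 1 else 0.

Lemma pencil_entry_upper (R : nzRingType) (r c : nat) :
  (c < r)%N -> pencil_entry R r c = 0.
Proof.
move=> cr; rewrite /pencil_entry ltn_eqF // ifF //.
by apply: negbTE; rewrite neq_ltn (ltn_trans cr).
Qed.

Lemma size_pencil_entry (R : nzRingType) (r c : nat) :
  (size (pencil_entry R r c) <= 2)%N.
Proof.
rewrite /pencil_entry; case: ifP => _; first by rewrite size_polyX.
by case: ifP => _; rewrite ?size_poly1 ?size_poly0.
Qed.

Theorem lemma3p7 (k j : nat) (hj : (j <= k.+1)%N) :
  exists (u : 'I_k.+1 -> 'cV[{poly algC}]_k)
         (v : 'I_k.+1 -> 'cV[{poly algC}]_k.+1),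
    Lpencil algC k = \sum_(i < k.+1) (u i *m (v i)^T) /\
    (forall i : 'I_k.+1, (vdeg (u i) <= 1)%N /\ (vdeg (v i) <= 1)%N) /\
    (forall i : 'I_k.+1, (val i < j)%N -> vdeg (u i) = 0%N) /\
    (forall i : 'I_k.+1, (j <= val i)%N -> vdeg (v i) = 0%N).
Proof.
pose a := pencil_entry algC.
exists (fun i => split_left a k j i), (fun i => split_right a k.+1 j i).
split; first exact: (upper_mx_split (@pencil_entry_upper algC) k k.+1 j).
split; [|split].
- by move=> i; split; [apply: vdeg_split_left_leq | apply: vdeg_split_right_leq];
    exact: size_pencil_entry.
- by move=> i; apply: vdeg_split_left_row.
- by move=> i; apply: vdeg_split_right_col.
Qed.
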